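(* Let $X$ be a $T_1$-space and let $\mathcal{B}$ be a base of $X$ which is regular at non-isolated points. Then the family $\mathcal{B}^{m}=\{P\in\mathcal{B}: \text{if } P\subset Q\in\mathcal{B} \text{ then } Q=P\}$ of maximal members of $\mathcal{B}$ is locally finite at non-isolated points and covers $X\setminus I(X)$.
   Context: $I(X)$ denotes the set of isolated points of $X$. A base $\mathcal{B}$ of $X$ is regular at a point $x$ if for every neighborhood $U$ of $x$ there is an open set $V$ with $x\in V\subset U$ such that $\{B\in\mathcal{B}: B\cap V\neq\emptyset \text{ and } B\not\subset U\}$ is finite. $\mathcal{B}$ is a regular base at non-isolated points if it is regular at every $x\in X\setminus I(X)$. A family $\mathcal{F}$ of subsets of $X$ is locally finite at non-isolated points if every $x\in X\setminus I(X)$ has a neighborhood meeting only finitely many members of $\mathcal{F}$. *)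

From Stdlib Require Import List.
Import ListNotations.

Set Implicit Arguments.

Definition set (X : Type) := X -> Prop.
Definition subset {X : Type} (A B : set X) : Prop := forall x, A x -> B x.
Definition set_eq {X : Type} (A B : set X) : Prop := forall x, A x <-> B x.
Definition meets {X : Type} (A B : set X) : Prop := exists x, A x /\ B x.

Record topology (X : Type) : Type := {
  is_open : set X -> Prop;
  open_full : is_open (fun _ => True);
  open_inter : forall U V, is_open U -> is_open V -> is_open (fun x => U x /\ V x);
  open_union : forall (F : set X -> Prop),
      (forall U, F U -> is_open U) -> is_open (fun x => exists U, F U /\ U x)
}.

Arguments is_open {X} t U.

Definition T1 {X : Type} (t : topology X) : Prop :=
  forall x y : X, x <> y -> exists U, is_open t U /\ U x /\ ~ U y.

Definition nbhd {X : Type} (t : topology X) (x : X) (N : set X) : Prop :=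
  exists U, is_open t U /\ U x /\ subset U N.

Definition isolated {X : Type} (t : topology X) (x : X) : Prop :=
  is_open t (fun y => y = x).

Definition is_base {X : Type} (t : topology X) (B : set X -> Prop) : Prop :=
  (forall P, B P -> is_open t P) /\
  (forall U x, is_open t U -> U x -> exists P, B P /\ P x /\ subset P U).

Definition finite_family {X : Type} (F : set X -> Prop) : Prop :=
  exists L : list (set X), forall P, F P -> exists Q, In Q L /\ set_eq P Q.

Definition regular_at {X : Type} (t : topology X) (B : set X -> Prop) (x : X) : Prop :=
  forall U, nbhd t x U ->
    exists V, is_open t V /\ V x /\ subset V U /\
      finite_family (fun P => B P /\ meets P V /\ ~ subset P U).

Definition regular_at_nonisolated {X : Type} (t : topology X) (B : set X -> Prop) : Prop :=
  forall x, ~ isolated t x -> regular_at t B x.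

Definition locally_finite_at_nonisolated {X : Type} (t : topology X)
    (F : set X -> Prop) : Prop :=
  forall x, ~ isolated t x ->
    exists N, nbhd t x N /\ finite_family (fun P => F P /\ meets P N).

Definition maximal_members {X : Type} (B : set X -> Prop) : set X -> Prop :=
  fun P => B P /\ forall Q, B Q -> subset P Q -> set_eq Q P.

From Stdlib Require Import List.
From Stdlib Require Import Classical Lia FunctionalExtensionality PropExtensionality.

(* Fix a non-isolated point x and a base member P0 containing x.
   - Local finiteness: regularity at x applied to the neighbourhood P0 yields an
     open V around x such that only finitely many base members meet V without
     lying inside P0.  A maximal member lying inside P0 equals P0, so the maximal
     members meeting V are P0 and members of that finite family.
   - Covering: since x is not isolated, P0 contains some y <> x, and T_1 gives an
     open W with x in W and y not in W.  Every base member containing P0 meets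
     any open V around x and is not inside W (it contains y); regularity at x
     applied to W therefore shows that the base members above P0 form a finite
     family.  A finite family of members above P0 always has a maximal one,
     which is a maximal member of the base containing x. *)

Section MaximalMembers.

Variable X : Type.

Lemma set_eq_sym (A C : set X) : set_eq A C -> set_eq C A.
Proof. intros h z; destruct (h z); split; assumption. Qed.

Lemma finite_family_extend (F G : set X -> Prop) (P0 : set X) :
  finite_family G -> (forall P, F P -> set_eq P P0 \/ G P) -> finite_family F.
Proof.
  intros [L HL] HFG.
  exists (P0 :: L); intros P HP.
  destruct (HFG P HP) as [HPP0 | HGP].
  - exists P0; split; [left; reflexivity | exact HPP0].
  - destruct (HL P HGP) as [Q [HQ HPQ]].
    exists Q; split; [right; exact HQ | exact HPQ].
Qed.

Variable B : set X -> Prop.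

(* Induction on a bound for the size of a list representing all members of B
   above Q: either Q is maximal, or we climb to a strictly larger Q', whose
   members above are represented by the list with Q's representative removed. *)
Lemma exists_maximal_above_bounded (n : nat) : forall (L : list (set X)) (Q : set X),
  length L <= n -> B Q ->
  (forall R, B R -> subset Q R -> exists S, In S L /\ set_eq R S) ->
  exists P, maximal_members B P /\ subset Q P.
Proof.
  induction n as [|n IH]; intros L Q HL HQ Hrep.
  - destruct L; [|simpl in HL; lia].
    destruct (Hrep Q HQ (fun x h => h)) as [S [[] _]].
  - destruct (classic (forall R, B R -> subset Q R -> set_eq R Q)) as [Hmax | Hnmax].
    { exists Q; split; [split; assumption | intros x h; exact h]. }
    apply not_all_ex_not in Hnmax as [Q' Hnmax].
    apply imply_to_and in Hnmax as [HQ' Hnmax].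
    apply imply_to_and in Hnmax as [HQQ' HQ'neQ].
    destruct (Hrep Q HQ (fun x h => h)) as [S0 [HS0 HQS0]].
    apply in_split in HS0 as [L1 [L2 ->]].
    destruct (IH (L1 ++ L2) Q') as [P [HP HQ'P]].
    + rewrite length_app in *; simpl in HL; lia.
    + exact HQ'.
    + intros R HR HQ'R.
      destruct (Hrep R HR (fun x h => HQ'R x (HQQ' x h))) as [S [HS HRS]].
      apply in_app_or in HS as [HS | [HS | HS]].
      * exists S; split; [apply in_or_app; left; exact HS | exact HRS].
      * (* R would coincide with Q, forcing Q' = Q *)
        subst S; exfalso; apply HQ'neQ; intros x; split; intro h.
        -- apply HQS0; apply HRS; apply HQ'R; exact h.
        -- apply HQQ', h.
      * exists S; split; [apply in_or_app; right; exact HS | exact HRS].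
    + exists P; split; [exact HP | intros x h; apply HQ'P, HQQ', h].
Qed.

Lemma exists_maximal_above (Q : set X) :
  B Q -> finite_family (fun R => B R /\ subset Q R) ->
  exists P, maximal_members B P /\ subset Q P.
Proof.
  intros HQ [L HL].
  apply (exists_maximal_above_bounded (length L) L Q (le_n _) HQ).
  intros R HR HQR; exact (HL R (conj HR HQR)).
Qed.

Variable t : topology X.

Lemma open_nbhd (U : set X) (x : X) : is_open t U -> U x -> nbhd t x U.
Proof. intros HU Hx; exists U; split; [exact HU | split; [exact Hx | intros z h; exact h]]. Qed.

Lemma base_covers (x : X) : is_base t B -> exists P0, B P0 /\ P0 x.
Proof.
  intros [_ Hbase].
  destruct (Hbase (fun _ => True) x (open_full t) I) as [P0 [HP0 [Hx _]]].
  exists P0; split; assumption.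
Qed.

Lemma open_nonisolated_other_point (P : set X) (x : X) :
  is_open t P -> P x -> ~ isolated t x -> exists y, P y /\ y <> x.
Proof.
  intros HP Hx Hnis.
  apply NNPP; intro Hnone; apply Hnis; unfold isolated.
  replace (fun y => y = x) with P; [exact HP |].
  apply functional_extensionality; intro z.
  apply propositional_extensionality; split; intro h.
  - apply NNPP; intro hz; apply Hnone; exists z; split; assumption.
  - subst z; exact Hx.
Qed.

Lemma regular_at_open (x : X) (U : set X) :
  regular_at t B x -> is_open t U -> U x ->
  exists V, is_open t V /\ V x /\
    finite_family (fun P => B P /\ meets P V /\ ~ subset P U).
Proof.
  intros Hreg HU Hx.
  destruct (Hreg U (open_nbhd U x HU Hx)) as [V [HV [HVx [_ Hfin]]]].
  exists V; split; [exact HV | split; [exact HVx | exact Hfin]].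
Qed.

Hypothesis hB : is_base t B.

(* The maximal members meeting V are P0 (if maximal members inside P0 exist,
   they equal P0) together with finitely many members not inside P0. *)
Lemma maximal_members_locally_finite_at (x : X) :
  regular_at t B x -> exists N, nbhd t x N /\
    finite_family (fun P => maximal_members B P /\ meets P N).
Proof.
  intros Hreg.
  destruct (base_covers x hB) as [P0 [HP0 HP0x]].
  destruct (regular_at_open x P0 Hreg (proj1 hB P0 HP0) HP0x) as [V [HV [HVx Hfin]]].
  exists V; split; [exact (open_nbhd V x HV HVx) |].
  apply (finite_family_extend _ _ P0 Hfin).
  intros M [[HM Hmax] HMV].
  destruct (classic (subset M P0)) as [HMP0 | HnMP0].
  - left; apply set_eq_sym, Hmax; assumption.
  - right; split; [exact HM | split; assumption].
Qed.

Hypothesis hT1 : T1 t.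

(* A non-isolated point lies in a maximal member: the members above a base
   member P0 containing x all meet every neighbourhood of x and all contain a
   point y <> x, hence all escape an open W containing x but not y. *)
Lemma maximal_member_covers (x : X) :
  ~ isolated t x -> regular_at t B x -> exists P, maximal_members B P /\ P x.
Proof.
  intros Hnis Hreg.
  destruct (base_covers x hB) as [P0 [HP0 HP0x]].
  destruct (open_nonisolated_other_point P0 x (proj1 hB P0 HP0) HP0x Hnis)
    as [y [HP0y Hyx]].
  destruct (hT1 x y (fun e => Hyx (eq_sym e))) as [W [HW [HWx HWy]]].
  destruct (regular_at_open x W Hreg HW HWx) as [V [_ [HVx Hfin]]].
  destruct (exists_maximal_above P0 HP0) as [P [HP HP0P]].
  - destruct Hfin as [L HL]; exists L.
    intros R [HR HP0R]; apply HL; split; [exact HR | split].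
    + exists x; split; [apply HP0R, HP0x | exact HVx].
    + intro HRW; apply HWy, HRW, HP0R, HP0y.
  - exists P; split; [exact HP | apply HP0P, HP0x].
Qed.

End MaximalMembers.

Theorem mainTheorem1 (X : Type) (t : topology X) (B : set X -> Prop)
  (hT1 : T1 t) (hB : is_base t B) (hreg : regular_at_nonisolated t B) :
  locally_finite_at_nonisolated t (maximal_members B) /\
  (forall x, ~ isolated t x -> exists P, maximal_members B P /\ P x).
Proof.
  split.
  - intros x Hnis; exact (maximal_members_locally_finite_at X B t hB x (hreg x Hnis)).
  - intros x Hnis; exact (maximal_member_covers X B t hB hT1 x Hnis (hreg x Hnis)).
Qed.
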